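(* Let $w/u$ be a skew partition of length $r$, $v$ a partition with $|v|=\operatorname{card}\mathcal D(w/u)$, and $c=(c_1,c_2):\mathcal D(w/u)\to Y(v)$ a bijection with inverse $b=(b_1,b_2)$. Then $c$ satisfies the LR rules if and only if all of the following hold: (h) for $(i,j),(i',j)\in\mathcal D(w/u)$ with $i<i'$: $c_1(i,j)<c_1(i',j)$; (th) for $(i,j),(i',j)\in\mathcal D(w/u)$ with $i<i'$: $c_2(i,j)\ge c_2(i',j)$; (w) for $(i,j),(i,j')\in\mathcal D(w/u)$ with $j<j'$: $c_2(i,j)>c_2(i,j')$; (tw) for $(i,j),(i,j')\in\mathcal D(w/u)$ with $j<j'$: $c_1(i,j)\le c_1(i,j')$; (h') for $(i,j),(i',j)\in Y(v)$ with $i<i'$: $b_1(i,j)<b_1(i',j)$; (th') for $(i,j),(i',j)\in Y(v)$ with $i<i'$: $b_2(i,j)\ge b_2(i',j)$; (w') for $(i,j),(i,j')\in Y(v)$ with $j<j'$: $b_2(i,j)>b_2(i,j')$; (tw') for $(i,j),(i,j')\in Y(v)$ with $j<j'$: $b_1(i,j)\le b_1(i,j')$.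
   Context: A generalized partition of length $r$ is a weakly decreasing sequence $u=(u_1,\dots,u_r)$ of integers; its diagram is $\mathcal D(u)=\{(i,j)\in\{1,\dots,r\}\times\mathbb Z: j\le u_i\}$. If $\mathcal D(u)\subset\mathcal D(w)$, the pair forms a skew partition $w/u$ with diagram $\mathcal D(w/u)=\mathcal D(w)\setminus\mathcal D(u)$. For an ordinary partition $v$, $Y(v)=\{(i,j): i\ge1,\ 1\le j\le v_i\}$. For $(i,j)$, $i$ is the height (row index) and $j$ the width (column index). The Littlewood–Richardson order on $\mathcal D(w/u)$ is the total order with $(i,j)<_{LR}(i',j')$ if $i<i'$, and $(i,j)<_{LR}(i,j')$ if $j>j'$. For $x\in\mathcal D(w/u)$ put $C(x)=\{c(y): y\le_{LR}x\}$. A bijection $c=(c_1,c_2):\mathcal D(w/u)\to Y(v)$ satisfies the LR rules iff (L1) $c_1$ is strictly increasing (in the height) on each column of $\mathcal D(w/u)$, (L2) $c_1$ is weakly increasing (in the width) on each row of $\mathcal D(w/u)$, and (Y) for each $x\in\mathcal D(w/u)$, $C(x)$ is a Young diagram, i.e. equals $Y(\mu)$ for some partition $\mu$. *)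

(* Cells are pairs (height, width) of integers, 1-based rows. *)
From mathcomp Require Import all_boot all_order all_algebra.
Set Implicit Arguments. Unset Strict Implicit. Unset Printing Implicit Defensive.
Import Order.TTheory GRing.Theory Num.Theory.
Local Open Scope ring_scope.

Definition cell := (int * int)%type.

Definition gen_partition (r : nat) (u : seq int) : Prop :=
  size u = r /\ sorted (fun a b : int => b <= a) u.

Definition nat_partition (v : seq nat) : Prop :=
  sorted geq v /\ all (fun x => 0 < x)%N v.

(* D(u) = {(i,j) : 1 <= i <= r, j <= u_i}  (u_i is the entry at 0-based i-1) *)
Definition inDiag (r : nat) (u : seq int) (x : cell) : Prop :=
  1 <= x.1 <= r%:Z /\ x.2 <= u`_(`|x.1 - 1|%N).

Definition skew_partition (r : nat) (w u : seq int) : Prop :=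
  gen_partition r w /\ gen_partition r u /\
  (forall x, inDiag r u x -> inDiag r w x).

Definition inSkew (r : nat) (w u : seq int) (x : cell) : Prop :=
  inDiag r w x /\ ~ inDiag r u x.

Definition inY (v : seq nat) (x : cell) : Prop :=
  1 <= x.1 /\ 1 <= x.2 /\ x.2 <= (nth 0%N v `|x.1 - 1|%N)%:Z.

(* |v| = card D(w/u), the cardinality written as sum of the row lengths *)
Definition card_skew (r : nat) (w u : seq int) : int :=
  \sum_(i < r) (w`_i - u`_i).

Definition leLR (x y : cell) : Prop :=
  x.1 < y.1 \/ (x.1 = y.1 /\ y.2 <= x.2).

Definition Cset (r : nat) (w u : seq int) (c : cell -> cell) (x : cell)
  (p : cell) : Prop :=
  exists y, inSkew r w u y /\ leLR y x /\ c y = p.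

Definition LR_rules (r : nat) (w u : seq int) (c : cell -> cell) : Prop :=
  (* (L1) *)
  (forall i i' j, inSkew r w u (i, j) -> inSkew r w u (i', j) -> i < i' ->
     (c (i, j)).1 < (c (i', j)).1) /\
  (* (L2) *)
  (forall i j j', inSkew r w u (i, j) -> inSkew r w u (i, j') -> j < j' ->
     (c (i, j)).1 <= (c (i, j')).1) /\
  (* (Y) *)
  (forall x, inSkew r w u x ->
     exists mu : seq nat, nat_partition mu /\
       forall p, Cset r w u c x p <-> inY mu p).

From mathcomp Require Import all_boot all_order all_algebra zify.
From mathcomp Require Import boolp.
Set Implicit Arguments. Unset Strict Implicit. Unset Printing Implicit Defensive.
Import Order.TTheory GRing.Theory Num.Theory.
Local Open Scope ring_scope.

(* Since [C(x)] is the image under [c] of an LR-initial segment, condition (Y)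
   says exactly that the inverse [b] is monotone from the componentwise order
   on [Y(v)] to the LR order: a subset of [Y(v)] is a Young diagram iff it is a
   lower set.  Monotonicity of [b] follows from its monotonicity along rows
   and columns of [Y(v)], i.e. from (h'), (w') and (tw'), which gives the
   converse implication.

   In the forward direction, monotonicity of [b], (L1) and (L2), applied to two
   cells at a time (skew diagrams being convex), give (w), (h'), (tw') and (w').
   The delicate condition is (th): if [c2(a,s) < c2(a+1,s)], the right
   neighbour of [c(a,s)] in [Y(v)] is [c(a,f)] for some [f < s], and this
   forces the same violation in column [s - 1]; descending along row [a]
   eventually leaves the skew diagram.  Then (th') follows from (h'), (w) and
   (th). *)

Lemma nat_lower_set_ltn (P : pred nat) n :
  (forall i j, (i <= j)%N -> P j -> P i) -> ~~ P n ->
  {m | forall j, P j = (j < m)%N}.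
Proof.
move=> P_lower notPn; have exP : exists n, ~~ P n by exists n.
exists (ex_minn exP); case: ex_minnP => m notPm m_min j.
have [lt_jm | le_mj] := ltnP j m.
  by apply/idPn => /m_min; rewrite leqNgt lt_jm.
by apply/negbTE/negP => /(P_lower _ _ le_mj); apply/negP.
Qed.

Lemma nat_partition_nth_antitone (v : seq nat) i j :
  nat_partition v -> (i <= j)%N -> (nth 0%N v j <= nth 0%N v i)%N.
Proof.
move=> [v_sorted _] le_ij; have [lt_j | ge_j] := ltnP j (size v); last by rewrite nth_default.
apply: (sorted_leq_nth (rev_trans leq_trans) leqnn 0%N v_sorted) => //.
by rewrite inE (leq_ltn_trans le_ij lt_j).
Qed.

Lemma nat_partition_of_antitone (m : nat -> nat) n :
  {homo m : i j /~ (i <= j)%N} -> m n = 0%N ->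
  exists mu, nat_partition mu /\ forall k, nth 0%N mu k = m k.
Proof.
move=> m_anti m_n.
have [len len_pos] : {len | forall k, (0 < m k)%N = (k < len)%N}.
  apply: (@nat_lower_set_ltn (fun k => 0 < m k)%N n); last by rewrite m_n.
  by move=> i j /m_anti le_ji /leq_trans; apply.
exists (mkseq m len); split; first split.
- by apply: homo_sorted; [move=> i j /m_anti | exact: iota_sorted].
- by apply/allP => x /mapP[k]; rewrite mem_iota add0n -len_pos => /andP[_ m_k_pos] ->.
- move=> k; have [lt_k | ge_k] := ltnP k len; first by rewrite nth_mkseq.
  by rewrite nth_default ?size_mkseq //; apply/esym/eqP; rewrite -leqn0 leqNgt len_pos -leqNgt.
Qed.

Lemma inY_pos (v : seq nat) (p : cell) : inY v p -> 1 <= p.1 /\ 1 <= p.2.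
Proof. by case=> p1_pos [p2_pos _]. Qed.

Lemma inY_lower (v : seq nat) (p q : cell) : nat_partition v -> inY v p ->
  1 <= q.1 <= p.1 -> 1 <= q.2 <= p.2 -> inY v q.
Proof.
move=> v_part [_ [_ p2_le]] /andP[q1_pos le_q1] /andP[q2_pos le_q2].
do 2 split=> //; apply: (le_trans le_q2); apply: (le_trans p2_le).
by rewrite lez_nat; apply: nat_partition_nth_antitone => //; lia.
Qed.

Lemma young_of_lower_set (v : seq nat) (S : cell -> Prop) :
  nat_partition v -> (forall p, S p -> inY v p) ->
  (forall p q : cell, S p -> 1 <= q.1 <= p.1 -> 1 <= q.2 <= p.2 -> S q) ->
  exists mu, nat_partition mu /\ forall p, S p <-> inY mu p.
Proof.
move=> v_part S_Y S_lower.
pose P k j := `[< S ((k.+1)%:Z, (j.+1)%:Z) >].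
have row k : {m | forall j, P k j = (j < m)%N}.
  apply: (@nat_lower_set_ltn (P k) (nth 0%N v k)).
    by move=> i j le_ij /asboolP S_kj; apply/asboolP; apply: (S_lower _ _ S_kj) => /=; lia.
  by apply/asboolP => /S_Y[_ [_ /=]]; rewrite subn1 /=; lia.
pose m k := sval (row k).
have S_row (p : cell) : 1 <= p.1 -> 1 <= p.2 -> S p <-> (`|p.2 - 1| < m `|p.1 - 1|)%N.
  case: p => p1 p2 /= p1_pos p2_pos; rewrite -(svalP (row _)) /P asboolE.
  by have -> : ((`|p1 - 1|.+1)%:Z, (`|p2 - 1|.+1)%:Z) = (p1, p2) by congr pair; lia.
have m_anti : {homo m : i j /~ (i <= j)%N}.
  move=> i j le_ji; rewrite leqNgt; apply/negP=> lt_mji.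
  have S_i : S ((i.+1)%:Z, ((m j).+1)%:Z) by apply/S_row => /=; rewrite ?subn1 /=; lia.
  have /S_row : S ((j.+1)%:Z, ((m j).+1)%:Z) by apply: (S_lower _ _ S_i) => /=; lia.
  by rewrite /= !subn1 /=; lia.
have m_end : m (size v) = 0%N.
  apply/eqP; rewrite -leqn0 leqNgt; apply/negP => m_pos.
  have /S_Y[_ [_ /=]] : S ((size v).+1%:Z, 1) by apply/S_row => /=; rewrite ?subn1 /=; lia.
  by rewrite subn1 /= nth_default.
have [mu [mu_part nth_mu]] := nat_partition_of_antitone m_anti m_end.
exists mu; split=> // p; split.
  move=> Sp; have [p1_pos p2_pos] := inY_pos (S_Y _ Sp).
  by move/S_row: Sp => /(_ p1_pos p2_pos); rewrite /inY nth_mu; lia.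
by move=> [p1_pos [p2_pos]]; rewrite nth_mu => p2_le; apply/S_row => //; lia.
Qed.

Lemma leLR_refl x : leLR x x.
Proof. by right. Qed.

Lemma leLR_trans y x z : leLR x y -> leLR y z -> leLR x z.
Proof. rewrite /leLR; lia. Qed.

Lemma gen_partition_nth_antitone r (t : seq int) a a' :
  gen_partition r t -> 1 <= a -> a <= a' -> a' <= r%:Z -> t`_`|a' - 1| <= t`_`|a - 1|.
Proof.
move=> [size_t t_sorted] a_pos le_aa' a'_le.
by apply: (sorted_leq_nth (rev_trans le_trans) lexx 0 t_sorted); rewrite ?inE ?size_t; lia.
Qed.

Lemma inSkewE r w u a s : inSkew r w u (a, s) <->
  1 <= a <= r%:Z /\ u`_`|a - 1| < s <= w`_`|a - 1|.
Proof.
rewrite /inSkew /inDiag /=; split=> [[[a_range s_le_w] s_notin_u] | [a_range /andP[u_lt_s s_le_w]]].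
  by split=> //; rewrite s_le_w andbT ltNge; apply/negP => s_le_u; apply: s_notin_u.
by do !split=> // -[_]; apply/negP; rewrite -ltNge.
Qed.

Lemma inSkew_convex r w u a1 s1 a2 s2 a s :
  gen_partition r w -> gen_partition r u ->
  inSkew r w u (a1, s1) -> inSkew r w u (a2, s2) ->
  a1 <= a <= a2 -> s1 <= s <= s2 -> inSkew r w u (a, s).
Proof.
move=> w_part u_part /inSkewE[a1_range s1_range] /inSkewE[a2_range s2_range] a_range s_range.
have u_anti := @gen_partition_nth_antitone _ _ a1 a u_part.
have w_anti := @gen_partition_nth_antitone _ _ a a2 w_part.
apply/inSkewE; move: a1_range s1_range a2_range s2_range a_range s_range u_anti w_anti.
lia.
Qed.

Definition col_increasing (P : cell -> Prop) (f : cell -> int) :=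
  forall i i' j, P (i, j) -> P (i', j) -> i < i' -> f (i, j) < f (i', j).

Definition col_nonincreasing (P : cell -> Prop) (f : cell -> int) :=
  forall i i' j, P (i, j) -> P (i', j) -> i < i' -> f (i', j) <= f (i, j).

Definition row_decreasing (P : cell -> Prop) (f : cell -> int) :=
  forall i j j', P (i, j) -> P (i, j') -> j < j' -> f (i, j') < f (i, j).

Definition row_nondecreasing (P : cell -> Prop) (f : cell -> int) :=
  forall i j j', P (i, j) -> P (i, j') -> j < j' -> f (i, j) <= f (i, j').

Definition LR_monotone (v : seq nat) (b : cell -> cell) :=
  forall p q, inY v p -> inY v q -> q.1 <= p.1 -> q.2 <= p.2 -> leLR (b q) (b p).

Lemma LR_monotone_of_rules v b : nat_partition v ->
  col_increasing (inY v) (fst \o b) -> row_decreasing (inY v) (snd \o b) ->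
  row_nondecreasing (inY v) (fst \o b) -> LR_monotone v b.
Proof.
move=> v_part b1_col b2_row b1_row [p1 p2] [q1 q2] Yp Yq /= le1 le2.
have [/= q1_pos q2_pos] := inY_pos Yq.
have Ym : inY v (q1, p2) by apply: (inY_lower v_part Yp) => /=; lia.
apply: (@leLR_trans (b (q1, p2))).
  have [lt2 | ->] : q2 < p2 \/ q2 = p2 by lia.
    by have := b1_row _ _ _ Yq Ym lt2; have := b2_row _ _ _ Yq Ym lt2; rewrite /leLR /=; lia.
  exact: leLR_refl.
have [lt1 | ->] : q1 < p1 \/ q1 = p1 by lia.
  by have := b1_col _ _ _ Ym Yp lt1; rewrite /leLR /=; lia.
exact: leLR_refl.
Qed.

Section LRBijection.

Variables (r : nat) (w u : seq int) (v : seq nat) (c b : cell -> cell).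
Hypotheses (w_part : gen_partition r w) (u_part : gen_partition r u).
Hypothesis v_part : nat_partition v.

Local Notation D := (inSkew r w u).

Hypothesis c_in : forall x, D x -> inY v (c x).
Hypothesis b_in : forall y, inY v y -> D (b y).
Hypothesis bK : forall x, D x -> b (c x) = x.
Hypothesis cK : forall y, inY v y -> c (b y) = y.

Definition LR_young :=
  forall x, D x -> exists mu, nat_partition mu /\ forall p, Cset r w u c x p <-> inY mu p.

Lemma LR_young_iff_monotone : LR_young <-> LR_monotone v b.
Proof.
split=> [young p q Yp Yq le1 le2 | b_mono x Dx].
  have [mu [mu_part C_mu]] := young _ (b_in Yp).
  have /C_mu Cp : Cset r w u c (b p) p.
    by exists (b p); split; [exact: b_in | split; [exact: leLR_refl | exact: cK]].
  have [q1_pos q2_pos] := inY_pos Yq.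
  have /C_mu[y [Dy [le_yp cy]]] : inY mu q by apply: (inY_lower mu_part Cp); lia.
  by rewrite -cy bK.
apply: young_of_lower_set v_part _ _ => [_ [y [Dy [_ <-]]] | _ q [y [Dy [le_yx <-]]] le_q1 le_q2].
  exact: c_in.
have Yq := inY_lower v_part (c_in Dy) le_q1 le_q2.
exists (b q); split; first exact: b_in.
split; last exact: cK.
apply: leLR_trans le_yx; rewrite -[y in leLR _ y](bK Dy).
by apply: b_mono => //; [exact: c_in | case/andP: le_q1 | case/andP: le_q2].
Qed.

Section Monotone.

Hypothesis b_mono : LR_monotone v b.

Lemma b_cell p : inY v p -> exists a s, [/\ b p = (a, s), D (a, s) & c (a, s) = p].
Proof.
move=> Yp; exists (b p).1, (b p).2; rewrite -surjective_pairing.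
by split; [| exact: b_in | exact: cK].
Qed.

Lemma c_LR_reflect x y : D x -> D y ->
  (c x).1 <= (c y).1 -> (c x).2 <= (c y).2 -> leLR x y.
Proof.
by move=> Dx Dy le1 le2; rewrite -(bK Dx) -(bK Dy); apply: b_mono => //; apply: c_in.
Qed.

Lemma b1_row_nondecreasing : row_nondecreasing (inY v) (fst \o b).
Proof.
move=> i j j' Yp Yp' lt_jj' /=.
by have := b_mono Yp' Yp (lexx _) (ltW lt_jj'); rewrite /leLR; lia.
Qed.

Hypothesis c1_col : col_increasing D (fst \o c).
Hypothesis c1_row : row_nondecreasing D (fst \o c).

Lemma c1_row_monotone a s t : D (a, s) -> D (a, t) -> s <= t ->
  (c (a, s)).1 <= (c (a, t)).1.
Proof.
by move=> Ds Dt; rewrite le_eqVlt => /orP[/eqP -> // | lt_st]; apply: c1_row Ds Dt lt_st.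
Qed.

Lemma c2_row_decreasing : row_decreasing D (snd \o c).
Proof.
move=> a s t Ds Dt lt_st /=; rewrite ltNge; apply/negP => le2.
by have := c_LR_reflect Ds Dt (c1_row Ds Dt lt_st) le2; rewrite /leLR /=; lia.
Qed.

Lemma c2_row_antitone a s t : D (a, s) -> D (a, t) -> s <= t ->
  (c (a, t)).2 <= (c (a, s)).2.
Proof.
move=> Ds Dt; rewrite le_eqVlt => /orP[/eqP -> // | lt_st].
exact/ltW/(c2_row_decreasing Ds Dt lt_st).
Qed.

Lemma b1_col_increasing : col_increasing (inY v) (fst \o b).
Proof.
move=> i i' j Yp Yp' lt_ii' /=; have := b_mono Yp' Yp (ltW lt_ii') (lexx _).
have [a [s [-> Ds cs]]] := b_cell Yp; have [a' [t [-> Dt ct]]] := b_cell Yp'.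
rewrite /leLR /= => -[// | [Ea le_ts]]; subst a'.
have [lt_ts | Ets] : t < s \/ t = s by lia.
  by have /= := c1_row Dt Ds lt_ts; rewrite cs ct /=; lia.
by move: ct; rewrite Ets cs => -[]; lia.
Qed.

Lemma b2_row_decreasing : row_decreasing (inY v) (snd \o b).
Proof.
move=> i j j' Yp Yp' lt_jj' /=; have := b_mono Yp' Yp (lexx _) (ltW lt_jj').
have [a [s [-> Ds cs]]] := b_cell Yp; have [a' [t [-> Dt ct]]] := b_cell Yp'.
rewrite /leLR /= => lr; rewrite ltNge; apply/negP => le_st.
case: lr => [lt_aa' | [Ea le_ts]].
  have Das : D (a', s) by apply: (inSkew_convex w_part u_part Ds Dt); lia.
  have /= := c1_col Ds Das lt_aa'; have := c1_row_monotone Das Dt le_st.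
  by rewrite cs ct /=; lia.
subst a'; have Ets : t = s by lia.
by move: ct; rewrite Ets cs => -[]; lia.
Qed.

Lemma right_neighbour_preimage (a a' s : int) : a' = a + 1 -> D (a, s) -> D (a', s) ->
  (c (a, s)).2 < (c (a', s)).2 ->
  exists2 f : int, f < s & D (a, f) /\ c (a, f) = ((c (a, s)).1, (c (a, s)).2 + 1).
Proof.
move=> Ea Ds Ds' lt2; have lt_a : a < a' by lia.
have /= lt1 := c1_col Ds Ds' lt_a.
have [/= i_pos j_pos] := inY_pos (c_in Ds).
have Yq : inY v ((c (a, s)).1, (c (a, s)).2 + 1).
  by apply: (inY_lower v_part (c_in Ds')) => /=; lia.
have [e [f [bq Df cf]]] := b_cell Yq.
have lr1 : leLR (a, s) (e, f).
  by rewrite -bq -{1}(bK Ds); apply: b_mono => //=; [exact: c_in | lia].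
have lr2 : leLR (e, f) (a', s).
  by rewrite -bq -(bK Ds'); apply: b_mono => //=; [exact: c_in | lia | lia].
have [[Ee le_fs] | [Ee le_sf]] : (e = a /\ f <= s) \/ (e = a' /\ s <= f).
  by move: lr1 lr2; rewrite /leLR /=; lia.
  subst e; exists f => //.
  rewrite lt_neqAle le_fs andbT; apply/eqP => Efs.
  by move: cf; rewrite Efs => /(congr1 snd) /=; lia.
subst e; have Daf : D (a, f) by apply: (inSkew_convex w_part u_part Ds Df); lia.
have /= := c1_col Daf Df lt_a; have := c1_row_monotone Ds Daf le_sf.
by rewrite cf /=; lia.
Qed.

Lemma c2_col_succ_descent (a a' s : int) : a' = a + 1 -> D (a, s) -> D (a', s) ->
  (c (a, s)).2 < (c (a', s)).2 ->
  exists2 s' : int, s' < s & [/\ D (a, s'), D (a', s') & (c (a, s')).2 < (c (a', s')).2].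
Proof.
move=> Ea Ds Ds' lt2; have [f lt_fs [Df cf]] := right_neighbour_preimage Ea Ds Ds' lt2.
(* Naming [s - 1] makes [(a, s')] a pair of [int]s rather than of a
   [zmodType] sort, so that [lia] sees a single atom [c (a, s')]. *)
have [s' Es'] : exists s' : int, s' = s - 1 by exists (s - 1).
have Dl : D (a, s') by apply: (inSkew_convex w_part u_part Df Ds); lia.
have Dl' : D (a', s') by apply: (inSkew_convex w_part u_part Df Ds'); lia.
have le_f : f <= s' by lia.
have lt_s : s' < s by lia.
exists s' => //; split=> //; have := c2_row_antitone Df Dl le_f.
by have /= := c2_row_decreasing Dl' Ds' lt_s; rewrite cf /=; lia.
Qed.

Lemma c2_col_succ (a a' s : int) : a' = a + 1 -> D (a, s) -> D (a', s) ->
  (c (a', s)).2 <= (c (a, s)).2.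
Proof.
move=> Ea; have [n] : exists n : nat, s <= u`_`|a - 1| + n%:Z.
  by exists (absz (s - u`_`|a - 1|)%R); lia.
elim: n s => [|n IH] s le_s Ds Ds'; first by move/inSkewE: Ds; lia.
rewrite leNgt; apply/negP => /(c2_col_succ_descent Ea Ds Ds')[s' lt_s [Dl Dl' lt2]].
have le_s' : s' <= u`_`|a - 1| + n%:Z by lia.
by have := IH _ le_s' Dl Dl'; lia.
Qed.

Lemma c2_col_nonincreasing : col_nonincreasing D (snd \o c).
Proof.
move=> a a' s Ds Ds' lt_aa' /=.
have [n Ea'] : exists n : nat, a' = a + n%:Z + 1 by exists (absz (a' - a - 1)%R); lia.
elim: n a' Ea' Ds' {lt_aa'} => [|n IH] a' Ea' Ds'.
  by apply: c2_col_succ Ds Ds'; lia.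
have [m Em] : exists m : int, m = a + n%:Z + 1 by exists (a + n%:Z + 1).
have Dm : D (m, s) by apply: (inSkew_convex w_part u_part Ds Ds'); lia.
by apply: le_trans (IH _ Em Dm); apply: c2_col_succ Dm Ds'; lia.
Qed.

Lemma b2_col_nonincreasing : col_nonincreasing (inY v) (snd \o b).
Proof.
move=> i i' j Yp Yp' lt_ii' /=; have /= := b1_col_increasing Yp Yp' lt_ii'.
have [a [s [-> Ds cs]]] := b_cell Yp; have [a' [t [-> Dt ct]]] := b_cell Yp'.
move=> /= lt_aa'; rewrite leNgt; apply/negP => lt_st.
have Dat : D (a, t) by apply: (inSkew_convex w_part u_part Ds Dt); lia.
have /= := c2_row_decreasing Ds Dat lt_st; have /= := c2_col_nonincreasing Dat Dt lt_aa'.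
by rewrite cs ct /=; lia.
Qed.

End Monotone.

Lemma LR_rules_iff :
  LR_rules r w u c <->
  col_increasing D (fst \o c) /\ col_nonincreasing D (snd \o c) /\
  row_decreasing D (snd \o c) /\ row_nondecreasing D (fst \o c) /\
  col_increasing (inY v) (fst \o b) /\ col_nonincreasing (inY v) (snd \o b) /\
  row_decreasing (inY v) (snd \o b) /\ row_nondecreasing (inY v) (fst \o b).
Proof.
split=> [[c1_col [c1_row /LR_young_iff_monotone b_mono]] | ].
  split; first exact: c1_col.
  split; first exact: c2_col_nonincreasing.
  split; first exact: c2_row_decreasing.
  split; first exact: c1_row.
  split; first exact: b1_col_increasing.
  split; first exact: b2_col_nonincreasing.
  split; first exact: b2_row_decreasing.
  exact: b1_row_nondecreasing.
move=> [c1_col [_ [_ [c1_row [b1_col [_ [b2_row b1_row]]]]]]].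
split; first exact: c1_col.
split; first exact: c1_row.
by apply/LR_young_iff_monotone/LR_monotone_of_rules.
Qed.

End LRBijection.

Theorem proposition4p11 (r : nat) (w u : seq int) (v : seq nat)
  (c b : cell -> cell) :
  skew_partition r w u ->
  nat_partition v ->
  (sumn v)%:Z = card_skew r w u ->
  (* c : D(w/u) -> Y(v) is a bijection with inverse b *)
  (forall x, inSkew r w u x -> inY v (c x)) ->
  (forall y, inY v y -> inSkew r w u (b y)) ->
  (forall x, inSkew r w u x -> b (c x) = x) ->
  (forall y, inY v y -> c (b y) = y) ->
  LR_rules r w u c <->
  ( (* (h) *)
      (forall i i' j, inSkew r w u (i, j) -> inSkew r w u (i', j) -> i < i' ->
         (c (i, j)).1 < (c (i', j)).1) /\
      (* (th) *)
      (forall i i' j, inSkew r w u (i, j) -> inSkew r w u (i', j) -> i < i' ->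
         (c (i, j)).2 >= (c (i', j)).2) /\
      (* (w) *)
      (forall i j j', inSkew r w u (i, j) -> inSkew r w u (i, j') -> j < j' ->
         (c (i, j)).2 > (c (i, j')).2) /\
      (* (tw) *)
      (forall i j j', inSkew r w u (i, j) -> inSkew r w u (i, j') -> j < j' ->
         (c (i, j)).1 <= (c (i, j')).1) /\
      (* (h') *)
      (forall i i' j, inY v (i, j) -> inY v (i', j) -> i < i' ->
         (b (i, j)).1 < (b (i', j)).1) /\
      (* (th') *)
      (forall i i' j, inY v (i, j) -> inY v (i', j) -> i < i' ->
         (b (i, j)).2 >= (b (i', j)).2) /\
      (* (w') *)
      (forall i j j', inY v (i, j) -> inY v (i, j') -> j < j' ->
         (b (i, j)).2 > (b (i, j')).2) /\
      (* (tw') *)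
      (forall i j j', inY v (i, j) -> inY v (i, j') -> j < j' ->
         (b (i, j)).1 <= (b (i, j')).1)).
Proof.
move=> [w_part [u_part _]] v_part _ c_in b_in bK cK.
exact: LR_rules_iff.
Qed.
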